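(* Let $S$ be a semigroup and $\emptyset\neq E\subseteq E(S)$. Then the partial operation $\circ$ on $C_E(S)$ is well defined (i.e. if $(e,s),(f,t)\in C_E(S)$ and $sf=s$ then $(e,st)\in C_E(S)$), and $P=(C_E(S),\circ,D)$ is a constellation whose set of right identities is $D(P)=\{(e,e)\mid e\in E\}$. Moreover, for $(e,s),(f,t)\in C_E(S)$, $(e,s)\le(f,t)$ in the natural quasiorder of $P$ if and only if $ef=e$ and $s=et$. If in addition $S$ is an $E$-demigroup, then $C^d_E(S)$ is a subconstellation of $C_E(S)$.
   Context: For a semigroup $S$, $E(S)$ denotes its set of idempotents. For $\emptyset\neq E\subseteq E(S)$, $C_E(S)=\{(e,s)\in E\times S\mid es=s\}$, with partial binary operation $(e,s)\circ(f,t)=(e,st)$, defined exactly when $sf=s$, and unary operation $D((e,s))=(e,e)$. A demigroup is a semigroup $S$ with a unary operation $d$ such that for all $x,y\in S$: $d(x)\in E(S)$, $d(x)x=x$ and $d(xy)=d(xd(y))$. For $E\subseteq E(S)$, a demigroup $S$ is an $E$-demigroup if $d(s)\in E$ for all $s\in S$ and $ed(e)=e$ for all $e\in E$. For an $E$-demigroup, $C^d_E(S)=\{(e,s)\in C_E(S)\mid d(e)=d(s)\}$ with the restricted operations. A constellation is a set $P$ with a partial binary operation $\circ$ and a unary operation $D$ such that for all $x,y,z\in P$: (C1) if $x\circ(y\circ z)$ exists then so does $(x\circ y)\circ z$, and they are equal; (C2) if $x\circ y$ and $y\circ z$ exist then $x\circ(y\circ z)$ exists; (C3) $D(x)$ is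 the unique right identity $e$ with $e\circ x=x$, where $e$ is a right identity if $a\circ e=a$ whenever $a\circ e$ exists. $D(P)=\{D(x)\mid x\in P\}$. The natural quasiorder on $P$ is: $s\le t$ iff $D(s)\circ t$ exists and equals $s$. A subset $Q\subseteq P$ is a subconstellation if $D(s)\in Q$ for all $s\in Q$, and $s\circ t\in Q$ whenever $s,t\in Q$ and $s\circ t$ exists in $P$. *)

Set Implicit Arguments.

Section Defs.
Variable T : Type.
Variable mul : T -> T -> T.

Definition associative_op : Prop :=
  forall x y z : T, mul x (mul y z) = mul (mul x y) z.

Definition idempotent (e : T) : Prop := mul e e = e.

Definition CE (E : T -> Prop) (p : T * T) : Prop :=
  E (fst p) /\ mul (fst p) (snd p) = snd p.

Definition CE_defined (p q : T * T) : Prop := mul (snd p) (fst q) = snd p.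
Definition CE_comp (p q : T * T) : T * T := (fst p, mul (snd p) (snd q)).
Definition CE_D (p : T * T) : T * T := (fst p, fst p).

Definition demigroup (d : T -> T) : Prop :=
  forall x y : T,
    idempotent (d x) /\ mul (d x) x = x /\ d (mul x y) = d (mul x (d y)).

Definition E_demigroup (E : T -> Prop) (d : T -> T) : Prop :=
  demigroup d /\ (forall s, E (d s)) /\ (forall e, E e -> mul e (d e) = e).

Definition CdE (E : T -> Prop) (d : T -> T) (p : T * T) : Prop :=
  CE E p /\ d (fst p) = d (snd p).
End Defs.

(* Constellations: carrier P (a predicate on a type X), a partial binary
   operation given by its domain of definition [def] and its value [comp]
   (meaningful only where [def] holds), and a unary operation [D]. *)
Section Constellation.
Variable X : Type.
Variables (P : X -> Prop) (def : X -> X -> Prop) (comp : X -> X -> X) (D : X -> X).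

Definition right_identity (e : X) : Prop :=
  P e /\ forall a, P a -> def a e -> comp a e = a.

Definition is_constellation : Prop :=
  (forall x y, P x -> P y -> def x y -> P (comp x y)) /\
  (forall x, P x -> P (D x)) /\
  (forall x y z, P x -> P y -> P z ->
     def y z -> def x (comp y z) ->
     def x y /\ def (comp x y) z /\ comp (comp x y) z = comp x (comp y z)) /\
  (forall x y z, P x -> P y -> P z ->
     def x y -> def y z -> def x (comp y z)) /\
  (forall x, P x ->
     right_identity (D x) /\ def (D x) x /\ comp (D x) x = x /\
     (forall e, right_identity e -> def e x -> comp e x = x -> e = D x)).

Definition D_image (p : X) : Prop := exists x, P x /\ D x = p.

Definition nat_le (s t : X) : Prop := def (D s) t /\ comp (D s) t = s.

Definition subconstellation (Q : X -> Prop) : Prop :=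
  (forall s, Q s -> P s) /\
  (forall s, Q s -> Q (D s)) /\
  (forall s t, Q s -> Q t -> def s t -> Q (comp s t)).
End Constellation.


(* The pivotal facts are that (e,s) o (f,t) = (e,st) stays in C_E(S), since
   e(st) = (es)t = st (associativity), and that the right identities of
   C_E(S) are exactly the pairs (e,e) with e in E: a right identity (g,h) acts
   on the element (g,g) as (g,gh) = (g,g), forcing h = gh = g.  With right
   identities known, axiom (C3), the description of D(P) and of the natural
   quasiorder follow by unfolding.  For C^d_E(S), the demigroup identity
   d(xy) = d(x d(y)) gives d(st) = d(s d(t)) = d(s d(f)) = d(sf) = d(s)
   whenever sf = s and d(f) = d(t), which is closure under the operation. *)

Set Implicit Arguments.

Section CESemigroup.
Variable T : Type.
Variable mul : T -> T -> T.
Hypothesis mul_assoc : associative_op mul.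
Variable E : T -> Prop.
Hypothesis E_idem : forall e, E e -> idempotent mul e.

Lemma CE_diag (e : T) : E e -> CE mul E (e, e).
Proof. intros He; split; [exact He | exact (E_idem He)]. Qed.

Lemma left_fixed_mul (e s t : T) : mul e s = s -> mul e (mul s t) = mul s t.
Proof. intros Hes; rewrite mul_assoc, Hes; reflexivity. Qed.

Lemma CE_comp_closed (p q : T * T) :
  CE mul E p -> CE mul E (CE_comp mul p q).
Proof.
  destruct p as [e s]; intros [He Hes]; split; [exact He|].
  exact (left_fixed_mul (snd q) Hes).
Qed.

Lemma CE_right_identity_iff (p : T * T) :
  right_identity (CE mul E) (CE_defined mul) (CE_comp mul) p <->
  exists e, E e /\ p = (e, e).
Proof.
  destruct p as [g h]; split.
  - intros [[Hg Hgh] Hright]; simpl in *.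
    exists g; split; [exact Hg|].
    (* (g,g) o (g,h) is defined and must equal (g,g); its value is (g,gh). *)
    assert (Hgg : CE_comp mul (g, g) (g, h) = (g, g))
      by exact (Hright (g, g) (CE_diag Hg) (E_idem Hg)).
    injection Hgg as Hgh'; rewrite Hgh in Hgh'; rewrite Hgh'; reflexivity.
  - intros [e [He Heq]]; injection Heq as -> ->.
    split; [exact (CE_diag He)|].
    intros [a u] _ Hdef; unfold CE_defined, CE_comp in *; simpl in *.
    rewrite Hdef; reflexivity.
Qed.

Lemma CE_C1 (x y z : T * T) :
  CE_defined mul y z -> CE_defined mul x (CE_comp mul y z) ->
  CE_defined mul x y /\ CE_defined mul (CE_comp mul x y) z /\
  CE_comp mul (CE_comp mul x y) z = CE_comp mul x (CE_comp mul y z).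
Proof.
  destruct x as [e s], y as [f t], z as [g u].
  unfold CE_defined, CE_comp; simpl; intros Hyz Hxyz.
  split; [exact Hxyz|]; split.
  - rewrite <- mul_assoc, Hyz; reflexivity.
  - rewrite mul_assoc; reflexivity.
Qed.

(* (C2): definedness of y o z depends only on the first coordinate of z,
   which y o z shares with y. *)
Lemma CE_C2 (x y z : T * T) :
  CE_defined mul x y -> CE_defined mul x (CE_comp mul y z).
Proof. intros Hxy; exact Hxy. Qed.

(* (C3): D(x) = (e,e) is a right identity acting as a left identity on x, and
   any right identity doing so has first coordinate e, hence equals D(x). *)
Lemma CE_C3 (x : T * T) : CE mul E x ->
  right_identity (CE mul E) (CE_defined mul) (CE_comp mul) (CE_D x) /\
  CE_defined mul (CE_D x) x /\ CE_comp mul (CE_D x) x = x /\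
  (forall r, right_identity (CE mul E) (CE_defined mul) (CE_comp mul) r ->
     CE_defined mul r x -> CE_comp mul r x = x -> r = CE_D x).
Proof.
  destruct x as [e s]; intros [He Hes]; simpl in *.
  split; [apply CE_right_identity_iff; exists e; split; [exact He | reflexivity]|].
  unfold CE_defined, CE_comp, CE_D; simpl.
  split; [exact (E_idem He)|].
  split; [rewrite Hes; reflexivity|].
  intros r Hr _ Hrx.
  apply CE_right_identity_iff in Hr; destruct Hr as [g [_ ->]].
  simpl in Hrx; injection Hrx as ->; reflexivity.
Qed.

Lemma CE_is_constellation :
  is_constellation (CE mul E) (CE_defined mul) (CE_comp mul) (@CE_D T).
Proof.
  split; [intros x y Hx _ _; exact (CE_comp_closed y Hx)|].
  split; [intros [e s] [He _]; exact (CE_diag He)|].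
  split; [intros x y z _ _ _; exact (@CE_C1 x y z)|].
  split; [intros x y z _ _ _ Hxy _; exact (CE_C2 z Hxy)|].
  exact CE_C3.
Qed.

Lemma CE_D_image_iff (p : T * T) :
  D_image (CE mul E) (@CE_D T) p <-> exists e, E e /\ p = (e, e).
Proof.
  split.
  - intros [[e s] [[He _] <-]]; exists e; split; [exact He | reflexivity].
  - intros [e [He ->]]; exists (e, e); split; [exact (CE_diag He) | reflexivity].
Qed.

Lemma CE_nat_le_iff (e s f t : T) :
  nat_le (CE_defined mul) (CE_comp mul) (@CE_D T) (e, s) (f, t) <->
  mul e f = e /\ s = mul e t.
Proof.
  unfold nat_le, CE_defined, CE_comp, CE_D; simpl; split.
  - intros [Hef Hs]; injection Hs as Hs; split; [exact Hef | symmetry; exact Hs].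
  - intros [Hef ->]; split; [exact Hef | reflexivity].
Qed.

End CESemigroup.

(* In a demigroup, d(st) = d(s) as soon as sf = s and d(f) = d(t):
   d(st) = d(s d(t)) = d(s d(f)) = d(sf) = d(s). *)
Lemma demigroup_d_mul (T : Type) (mul : T -> T -> T) (d : T -> T)
  (s f t : T) :
  demigroup mul d -> mul s f = s -> d f = d t -> d (mul s t) = d s.
Proof.
  intros Hd Hsf Hft.
  destruct (Hd s t) as [_ [_ Hst]]; destruct (Hd s f) as [_ [_ Hsf']].
  rewrite Hst, <- Hft, <- Hsf', Hsf; reflexivity.
Qed.

Lemma CdE_subconstellation (T : Type) (mul : T -> T -> T)
  (mul_assoc : associative_op mul) (E : T -> Prop)
  (E_idem : forall e, E e -> idempotent mul e) (d : T -> T) :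
  E_demigroup mul E d ->
  subconstellation (CE mul E) (CE_defined mul) (CE_comp mul) (@CE_D T) (CdE mul E d).
Proof.
  intros [Hdemi _].
  split; [intros p [Hp _]; exact Hp|].
  split; [intros [e s] [[He _] _]; split; [exact (CE_diag E E_idem e He) | reflexivity]|].
  intros [e s] [f t] [Hx Hdes] [_ Hdft] Hdef.
  unfold CE_defined in Hdef; simpl in *.
  split; [exact (CE_comp_closed mul_assoc (f, t) Hx)|].
  simpl; rewrite (demigroup_d_mul f t Hdemi Hdef Hdft); exact Hdes.
Qed.

Theorem proposition3p1 (T : Type) (mul : T -> T -> T)
  (Hassoc : associative_op mul)
  (E : T -> Prop) (HEne : exists e, E e) (HEid : forall e, E e -> idempotent mul e) :
  (* well-definedness of the partial operation *)
  (forall e s f t, CE mul E (e, s) -> CE mul E (f, t) -> mul s f = s ->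
     CE mul E (e, mul s t)) /\
  (* C_E(S) is a constellation *)
  is_constellation (CE mul E) (CE_defined mul) (CE_comp mul) (@CE_D T) /\
  (* its right identities are exactly the (e,e), e in E *)
  (forall p, right_identity (CE mul E) (CE_defined mul) (CE_comp mul) p <->
             exists e, E e /\ p = (e, e)) /\
  (* D(P) = {(e,e) | e in E} *)
  (forall p, D_image (CE mul E) (@CE_D T) p <-> exists e, E e /\ p = (e, e)) /\
  (* description of the natural quasiorder *)
  (forall e s f t, CE mul E (e, s) -> CE mul E (f, t) ->
     (nat_le (CE_defined mul) (CE_comp mul) (@CE_D T) (e, s) (f, t) <->
      mul e f = e /\ s = mul e t)) /\
  (* C^d_E(S) is a subconstellation when S is an E-demigroup *)
  (forall d : T -> T, E_demigroup mul E d ->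
     subconstellation (CE mul E) (CE_defined mul) (CE_comp mul) (@CE_D T)
       (CdE mul E d)).
Proof.
  split; [intros e s f t Hes _ _; exact (CE_comp_closed Hassoc (f, t) Hes)|].
  split; [exact (CE_is_constellation Hassoc E HEid)|].
  split; [exact (CE_right_identity_iff E HEid)|].
  split; [exact (CE_D_image_iff E HEid)|].
  split; [intros e s f t _ _; exact (CE_nat_le_iff mul e s f t)|].
  exact (CdE_subconstellation Hassoc HEid).
Qed.
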